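(* Let $A=\sigma(R)\langle x_1,\dots,x_n\rangle$ be a quasi-commutative bijective $\sigma$-PBW extension of $R$ (under the standing assumptions below). Let $M\neq0$ be a submodule of $A^m$ and let $G$ be a finite set of nonzero generators of $M$. Then $G$ is a Gröbner basis of $M$ if and only if for every $F=\{\mathbf g_1,\dots,\mathbf g_s\}\subseteq G$ with $\mathbf X_F\neq\mathbf 0$ and every $(b_1,\dots,b_s)\in B_F$ we have $\sum_{i=1}^sb_ix^{\gamma_i}\mathbf g_i\xrightarrow{G}_+\mathbf 0$.
   Context: Let $R\subseteq A$ be rings. $A$ is a $\sigma$-PBW extension of $R$, written $A=\sigma(R)\langle x_1,\dots,x_n\rangle$, if there are $x_1,\dots,x_n\in A\setminus R$ such that: (i) $A$ is a free left $R$-module with basis $\mathrm{Mon}(A)=\{x^\alpha=x_1^{\alpha_1}\cdots x_n^{\alpha_n}:\alpha\in\mathbb N^n\}$, with $x^0=1$; (ii) for every $i$ and every $r\in R\setminus\{0\}$ there is $c_{i,r}\in R\setminus\{0\}$ with $x_ir-c_{i,r}x_i\in R$; (iii) for all $i,j$ there is $c_{i,j}\in R\setminus\{0\}$ with $x_jx_i-c_{i,j}x_ix_j\in R+Rx_1+\dots+Rx_n$. There are injective ring endomorphisms $\sigma_i$ of $R$ and $\sigma_i$-derivations $\delta_i$ with $x_ir=\sigma_i(r)x_i+\delta_i(r)$. Write $\sigma^\alpha=\sigma_1^{\alpha_1}\circ\cdots\circ\sigma_n^{\alpha_n}$ and $|\alpha|=\sum\alpha_i$. For $\alpha,\beta$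 there are unique $c_{\alpha,\beta}\in R$ (left invertible) and $p_{\alpha,\beta}\in A$ with $x^\alpha x^\beta=c_{\alpha,\beta}x^{\alpha+\beta}+p_{\alpha,\beta}$, where $p_{\alpha,\beta}=0$ or $\deg p_{\alpha,\beta}<|\alpha+\beta|$. $A$ is quasi-commutative if $x_ir=c_{i,r}x_i$ and $x_jx_i=c_{i,j}x_ix_j$ exactly. $A$ is bijective if each $\sigma_i$ is bijective and $c_{i,j}$ is invertible for $i<j$. Standing assumptions: $R$ is left Gröbner soluble (left Noetherian; left ideal membership decidable with computable coefficients; finite generating sets of $\mathrm{Syz}_R[r_1\cdots r_k]=\{(b_1,\dots,b_k)\in R^k:\sum b_ir_i=0\}$ computable). $\mathrm{Mon}(A)$ carries a monomial order, i.e. a total order $\succeq$ with: (a) $x^\beta\succeq x^\alpha\Rightarrow lm(x^\gamma x^\beta x^\lambda)\succeq lm(x^\gamma x^\alpha x^\lambda)$; (b) $x^\alpha\succeq1$; (c) $|\beta|\ge|\alpha|\Rightarrow x^\beta\succeq x^\alpha$. $A^m$ is the free left $A$-module of column vectors with canonical basis $\mathbf e_i$. Monomials of $A^m$ are $x^\alpha\mathbf e_i$, with $\mathrm{ind}=i$, $\exp=\alpha$, $\deg=|\alpha|$. The monomial $x^\alpha\mathbf e_i$ divides $x^\beta\mathbf e_j$ iff $i=j$ and $\beta_k\ge\alpha_k$ for all $k$. The lcm of $x^\alpha\mathbf e_i$ and $x^\beta\mathbf e_j$ is $\mathbf 0$ if $i\neq j$, and $x^\gamma\mathbf e_i$ with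 $\gamma_k=\max(\alpha_k,\beta_k)$ if $i=j$. $\mathrm{Mon}(A^m)$ carries a monomial order, i.e. a total order with: (i) $lm(x^\beta x^\alpha)\mathbf e_i\succeq x^\alpha\mathbf e_i$; (ii) $x^\beta\mathbf e_j\succeq x^\alpha\mathbf e_i\Rightarrow lm(x^\gamma x^\beta)\mathbf e_j\succeq lm(x^\gamma x^\alpha)\mathbf e_i$; (iii) $\deg\mathbf X\ge\deg\mathbf Y\Rightarrow\mathbf X\succeq\mathbf Y$. For nonzero $\mathbf f=c_1\mathbf X_1+\dots+c_t\mathbf X_t$ with $c_i\in R\setminus\{0\}$ and $\mathbf X_1\succ\dots\succ\mathbf X_t$, set $lm(\mathbf f)=\mathbf X_1$, $lc(\mathbf f)=c_1$, $lt(\mathbf f)=c_1\mathbf X_1$. Also $lm(\mathbf 0)=\mathbf 0$ and $\mathbf X\succ\mathbf 0$. Reduction. Let $F$ be a finite set of nonzero vectors and $\mathbf f,\mathbf h\in A^m$. We write $\mathbf f\xrightarrow{F}\mathbf h$ (one step) if there are $\mathbf f_1,\dots,\mathbf f_t\in F$ and $r_1,\dots,r_t\in R$ with: (1) $lm(\mathbf f_i)\mid lm(\mathbf f)$, with $\alpha_i+\exp(lm\,\mathbf f_i)=\exp(lm\,\mathbf f)$; (2) $lc(\mathbf f)=\sum r_i\sigma^{\alpha_i}(lc\,\mathbf f_i)c_{\alpha_i,\exp(lm\,\mathbf f_i)}$; (3) $\mathbf h=\mathbf f-\sum r_ix^{\alpha_i}\mathbf f_i$. By convention $\mathbf 0\xrightarrow{F}\mathbf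 0$. $\mathbf f\xrightarrow{F}_+\mathbf h$ means a finite chain of one-step reductions from $\mathbf f$ to $\mathbf h$. $\mathbf f$ is reduced w.r.t. $F$ if $\mathbf f=\mathbf 0$ or no one-step reduction of $\mathbf f$ exists; otherwise it is reducible. Gröbner basis. For a submodule $M\neq0$ of $A^m$, a nonempty finite set $G$ of nonzero vectors of $M$ is a Gröbner basis for $M$ if every nonzero $\mathbf f\in M$ is reducible w.r.t. $G$. Syzygy data. For $F=\{\mathbf g_1,\dots,\mathbf g_s\}\subseteq A^m$: - $\mathbf X_F=\mathrm{lcm}\{lm(\mathbf g_1),\dots,lm(\mathbf g_s)\}$; - $\beta_i=\exp(lm\,\mathbf g_i)$; - when $\mathbf X_F\neq\mathbf 0$, $\gamma_i\in\mathbb N^n$ is defined by $\gamma_i+\beta_i=\exp(\mathbf X_F)$. $B_F$ is a finite generating set of the left $R$-module $\mathrm{Syz}_R\big[\sigma^{\gamma_1}(lc\,\mathbf g_1)c_{\gamma_1,\beta_1}\ \cdots\ \sigma^{\gamma_s}(lc\,\mathbf g_s)c_{\gamma_s,\beta_s}\big]$. *)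

From HB Require Import structures.
From mathcomp Require Import all_boot all_order all_algebra.
From Stdlib Require Import ClassicalEpsilon.
Set Implicit Arguments. Unset Strict Implicit. Unset Printing Implicit Defensive.
Import GRing.Theory.
Local Open Scope ring_scope.

Definition exps (n : nat) := {ffun 'I_n -> nat}.
Definition eadd n (a b : exps n) : exps n := [ffun k => (a k + b k)%N].
(* componentwise (truncated) difference; used only when b <= a componentwise *)
Definition esub n (a b : exps n) : exps n := [ffun k => (a k - b k)%N].
Definition e0 n : exps n := [ffun _ => 0%N].
Definition edeg n (a : exps n) : nat := (\sum_(k < n) a k)%N.

Definition total_order (T : Type) (r : rel T) :=
  [/\ reflexive r, antisymmetric r, transitive r & total r].

Definition left_noetherian (R : nzRingType) : Prop :=
  forall I : R -> Prop,
    I 0 -> (forall a b, I a -> I b -> I (a + b)) -> (forall r a, I a -> I (r * a)) ->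
    exists s : seq R, (forall a, a \in s -> I a) /\
      forall a, I a -> exists c : seq R, size c = size s /\
        a = \sum_(k < size s) c`_k * s`_k.

Section PBW.
Variables (R A : nzRingType) (n m : nat).
Variable iota : R -> A.
Variable x : 'I_n -> A.
Variable sigma : 'I_n -> R -> R.
Variable cf : A -> exps n -> R.     (* coordinates w.r.t. the basis Mon(A) *)
Variable ordA : rel (exps n).       (* monomial order on Mon(A): ordA a b <-> x^a ⪰ x^b *)
Variable ordm : rel (exps n * 'I_m). (* monomial order on Mon(A^m): ordm (a,i) (b,j) <-> x^a e_i ⪰ x^b e_j *)

Definition xmon (a : exps n) : A := \prod_(i < n) x i ^+ a i.

Definition mon_lin_indep : Prop :=
  forall (s : seq (exps n)) (r : exps n -> R), uniq s ->
    \sum_(a <- s) iota (r a) * xmon a = 0 -> forall a, a \in s -> r a = 0.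
Definition coord_repr : Prop :=
  forall p : A, exists s : seq (exps n), [/\ uniq s,
     (forall a, cf p a != 0 -> a \in s) &
     p = \sum_(a <- s) iota (cf p a) * xmon a].

Definition sigma_pow (a : exps n) (r : R) : R :=
  foldr (fun i acc => iter (a i) (sigma i) acc) r (enum 'I_n).

Definition cab (a b : exps n) : R := cf (xmon a * xmon b) (eadd a b).

(* leading monomial of an element of A (None = the zero monomial 0) *)
Definition lmA (p : A) : option (exps n) :=
  epsilon (inhabits None) (fun o => match o with
    | None => p = 0
    | Some a => cf p a != 0 /\ forall b, cf p b != 0 -> ordA a b
    end).

Definition ogeA (X Y : option (exps n)) : bool :=
  match X, Y with
  | Some a, Some b => ordA a b
  | _, None => true
  | None, Some _ => false
  end.

Definition monorderA : Prop :=
  [/\ total_order ordA,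
      (forall a b c l, ordA b a ->
          ogeA (lmA (xmon c * xmon b * xmon l)) (lmA (xmon c * xmon a * xmon l))),
      (forall a, ordA a (e0 n)) &
      (forall a b, (edeg a < edeg b)%N -> ordA b a)].

Definition vmon := (exps n * 'I_m)%type.

Definition cfv (f : 'cV[A]_m) (X : vmon) : R := cf (f X.2 ord0) X.1.

Definition ogeV (X Y : option vmon) : bool :=
  match X, Y with
  | Some a, Some b => ordm a b
  | _, None => true
  | None, Some _ => false
  end.

Definition monorderV : Prop :=
  [/\ total_order ordm,
      (forall (a b : exps n) (i : 'I_m),
          ogeV (omap (fun g => (g, i)) (lmA (xmon b * xmon a))) (Some (a, i))),
      (forall (a b c : exps n) (i j : 'I_m), ordm (b, j) (a, i) ->
          ogeV (omap (fun g => (g, j)) (lmA (xmon c * xmon b)))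
               (omap (fun g => (g, i)) (lmA (xmon c * xmon a)))) &
      (forall X Y : vmon, (edeg Y.1 < edeg X.1)%N -> ordm X Y)].

Definition lmv (f : 'cV[A]_m) : option vmon :=
  epsilon (inhabits None) (fun o => match o with
    | None => f = 0
    | Some X => cfv f X != 0 /\ forall Y, cfv f Y != 0 -> ordm X Y
    end).

Definition lcv (f : 'cV[A]_m) : R :=
  match lmv f with Some X => cfv f X | None => 0 end.

Definition expo (o : option vmon) : exps n :=
  match o with Some X => X.1 | None => e0 n end.

Definition mdiv (o1 o2 : option vmon) : bool :=
  match o1, o2 with
  | Some (a, i), Some (b, j) => (i == j) && [forall k, (a k <= b k)%N]
  | _, _ => false
  end.

(* lcm of monomials of A^m (None = 0) *)
Definition mlcm (o1 o2 : option vmon) : option vmon :=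
  match o1, o2 with
  | Some (a, i), Some (b, j) =>
      if i == j then Some ([ffun k => maxn (a k) (b k)], i) else None
  | _, _ => None
  end.

Definition red1 (G : seq 'cV[A]_m) (f h : 'cV[A]_m) : Prop :=
  (f = 0 /\ h = 0) \/
  (f != 0 /\ exists L : seq ('cV[A]_m * R),
     let al (g : 'cV[A]_m) := esub (expo (lmv f)) (expo (lmv g)) in
     [/\ all (fun p => p.1 \in G) L,
         all (fun p => mdiv (lmv p.1) (lmv f)) L,
         lcv f = \sum_(p <- L) p.2 * sigma_pow (al p.1) (lcv p.1) * cab (al p.1) (expo (lmv p.1)) &
         h = f - \sum_(p <- L) (iota p.2 * xmon (al p.1)) *: p.1]).

Inductive red_plus (G : seq 'cV[A]_m) : 'cV[A]_m -> 'cV[A]_m -> Prop :=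
  | rp_one f h : red1 G f h -> red_plus G f h
  | rp_step f g h : red1 G f g -> red_plus G g h -> red_plus G f h.

Definition reducible (G : seq 'cV[A]_m) (f : 'cV[A]_m) : Prop :=
  f != 0 /\ exists h, red1 G f h.

Definition is_submodule (M : 'cV[A]_m -> Prop) : Prop :=
  [/\ M 0, (forall u v, M u -> M v -> M (u + v)) & (forall (a : A) u, M u -> M (a *: u))].

Definition spanned (G : seq 'cV[A]_m) (v : 'cV[A]_m) : Prop :=
  exists a : seq A, size a = size G /\ v = \sum_(i < size G) a`_i *: G`_i.

Definition is_groebner (M : 'cV[A]_m -> Prop) (G : seq 'cV[A]_m) : Prop :=
  [/\ G != [::], all (fun g => g != 0) G, (forall g, g \in G -> M g) &
      forall f, M f -> f != 0 -> reducible G f].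

Definition XF (F : seq 'cV[A]_m) : option vmon :=
  match F with
  | [::] => None
  | g :: F' => foldl (fun acc h => mlcm acc (lmv h)) (lmv g) F'
  end.

Definition gam (F : seq 'cV[A]_m) (g : 'cV[A]_m) : exps n :=
  esub (expo (XF F)) (expo (lmv g)).

Definition syz_weights (F : seq 'cV[A]_m) : seq R :=
  [seq sigma_pow (gam F g) (lcv g) * cab (gam F g) (expo (lmv g)) | g <- F].

Definition is_syz (w b : seq R) : Prop :=
  size b = size w /\ \sum_(i < size w) b`_i * w`_i = 0.

Definition generates_syz (B : seq (seq R)) (w : seq R) : Prop :=
  (forall b, b \in B -> is_syz w b) /\
  forall b, is_syz w b -> exists c : seq R, size c = size B /\
    forall i, (i < size w)%N -> b`_i = \sum_(k < size B) c`_k * (nth [::] B k)`_i.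

Definition syz_sum (F : seq 'cV[A]_m) (b : seq R) : 'cV[A]_m :=
  \sum_(i < size F) (iota b`_i * xmon (gam F F`_i)) *: F`_i.

End PBW.

(* In a quasi-commutative bijective extension x^a r x^b = sigma^a(r) c_{a,b} x^{a+b} with
   c_{a,b} invertible and sigma^a bijective, so left multiplication by r x^a shifts leading
   monomials by a and acts bijectively on leading coefficients.

   A Groebner basis reduces every element of M to 0, in particular every syzygy sum.
   Conversely, write f in M as a sum of terms r x^a g with g in G and let X be the largest
   leading monomial x^a lm(g) among them.  If X is above lm(f), the terms with leading
   monomial X cancel there; pulled back along x^{X - X_F}, their coefficients form a syzygy of
   the leading coefficients of the g involved, hence an R-combination of B_F.  Each element of
   B_F gives a sum reducing to 0, which therefore is a sum of terms below X_F, so the top part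
   can be rewritten with terms strictly below X.  The monomial order being a well-order, we
   reach X = lm(f), and then the top terms are a one-step reduction of f. *)

From HB Require Import structures.
From mathcomp Require Import all_boot all_order all_algebra.
From Stdlib Require Import ClassicalEpsilon.
Set Implicit Arguments. Unset Strict Implicit. Unset Printing Implicit Defensive.
Import GRing.Theory.
Local Open Scope ring_scope.

Lemma big_supp_eq (V : nmodType) (T : eqType) (u v : seq T) (F : T -> V) (P : pred T) :
  uniq u -> uniq v -> (forall a, ~~ P a -> F a = 0) ->
  {subset P <= u} -> {subset P <= v} ->
  \sum_(a <- u) F a = \sum_(a <- v) F a.
Proof.
move=> uu uv F0 Pu Pv.
rewrite -(big_rmcond _ _ F0) -(big_rmcond _ v F0) -big_filter -[RHS]big_filter.
apply: perm_big; apply: uniq_perm; rewrite ?filter_uniq // => a.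
by rewrite !mem_filter; case Pa: (P a) => //=; rewrite (Pu _ Pa) (Pv _ Pa).
Qed.

Lemma sumr_neq0_witness (V : nmodType) (I : eqType) (s : seq I) (F : I -> V) :
  \sum_(i <- s) F i != 0 -> exists2 i, i \in s & F i != 0.
Proof.
elim: s => [|i s IH]; first by rewrite big_nil eqxx.
rewrite big_cons; have [Fi0 | Fi] := eqVneq (F i) 0.
  by rewrite Fi0 add0r => /IH [j js Fj]; exists j; rewrite ?inE ?js ?orbT.
by exists i; rewrite ?mem_head.
Qed.

Lemma big_partition_key (V : nmodType) (I K : eqType) (s : seq I) (F : seq K)
    (key : I -> K) (H : I -> V) :
  uniq F -> (forall t, t \in s -> key t \in F) ->
  \sum_(t <- s) H t = \sum_(g <- F) \sum_(t <- s | key t == g) H t.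
Proof.
move=> uF hF; under [RHS]eq_bigr do rewrite big_mkcond.
rewrite exchange_big /=; apply: eq_big_seq => t ts.
rewrite -big_mkcond /= -big_filter (eq_filter (a2 := pred1 (key t))); last first.
  by move=> g; rewrite /= eq_sym.
by rewrite filter_pred1_uniq ?hF // big_seq1.
Qed.

Definition invertible (R : nzRingType) (c : R) := exists d, c * d = 1 /\ d * c = 1.

Lemma invertible1 (R : nzRingType) : invertible (1 : R).
Proof. by exists 1; rewrite mulr1. Qed.

Lemma invertibleM (R : nzRingType) (a b : R) :
  invertible a -> invertible b -> invertible (a * b).
Proof.
move=> [d [h1 h2]] [e [k1 k2]]; exists (e * d); split.
  by rewrite mulrA -(mulrA a) k1 mulr1 h1.
by rewrite mulrA -(mulrA e) h2 mulr1 k2.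
Qed.

Lemma invertible_neq0 (R : nzRingType) (a : R) : invertible a -> a != 0.
Proof.
by move=> [d [h _]]; apply: contra_eq_neq h => ->; rewrite mul0r eq_sym oner_neq0.
Qed.

Lemma iter_bij (T : Type) (f : T -> T) k : bijective f -> bijective (iter k f).
Proof.
move=> bf; elim: k => [|k IH]; first by exists id.
by apply: (eq_bij (bij_comp bf IH)).
Qed.

Section PBW.
Variables (R A : nzRingType) (n m : nat) (iota : {rmorphism R -> A})
  (x : 'I_n -> A) (sigma : 'I_n -> R -> R) (cf : A -> exps n -> R)
  (ordA : rel (exps n)) (ordm : rel (exps n * 'I_m)).
Hypothesis xmon_free : mon_lin_indep iota x.
Hypothesis cf_repr : coord_repr iota x cf.

Local Notation xm := (xmon x).

(** * Coordinates *)

Lemma cf_expand (p : A) u : uniq u -> (forall a, cf p a != 0 -> a \in u) ->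
  p = \sum_(a <- u) iota (cf p a) * xm a.
Proof.
move=> uu Su; have [s [us Ss ep]] := cf_repr p; rewrite {1}ep.
apply: (@big_supp_eq _ _ s u _ (fun a => cf p a != 0)) => //.
by move=> a; rewrite negbK => /eqP->; rewrite rmorph0 mul0r.
Qed.

Lemma cf_unique (s : seq (exps n)) (r : exps n -> R) (p : A) : uniq s ->
  p = \sum_(a <- s) iota (r a) * xm a -> forall b, cf p b = if b \in s then r b else 0.
Proof.
move=> us ep b; have [s' [us' Ss ep']] := cf_repr p.
set u := undup (s ++ s'); have uu : uniq u by rewrite undup_uniq.
pose r0 a := if a \in s then r a else 0.
have e1 : \sum_(a <- u) iota (r0 a) * xm a = p.
  rewrite ep; transitivity (\sum_(a <- s) iota (r0 a) * xm a).
    apply: (@big_supp_eq _ _ u s _ (fun a => a \in s)) => //.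
    - by move=> a /negbTE Ha; rewrite /r0 Ha rmorph0 mul0r.
    - by move=> a Ha; rewrite mem_undup mem_cat Ha.
  by apply: eq_big_seq => a Ha; rewrite /r0 Ha.
have e2 : \sum_(a <- u) iota (cf p a) * xm a = p.
  by rewrite -cf_expand // => a Ha; rewrite mem_undup mem_cat (Ss _ Ha) orbT.
have e3 : \sum_(a <- u) iota (r0 a - cf p a) * xm a = 0.
  under eq_bigr do rewrite rmorphB mulrBl.
  by rewrite sumrB e1 e2 subrr.
have z := xmon_free uu e3.
case/boolP: (b \in u) => bu.
  by have /eqP := z b bu; rewrite subr_eq0 /r0 => /eqP <-.
have bs : b \notin s by apply: contra bu => bs; rewrite mem_undup mem_cat bs.
rewrite (negbTE bs); apply/eqP; apply: contraR bu => /Ss bs'.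
by rewrite mem_undup mem_cat bs' orbT.
Qed.

Lemma cfD p q b : cf (p + q) b = cf p b + cf q b.
Proof.
have [sp [_ Sp _]] := cf_repr p; have [sq [_ Sq _]] := cf_repr q.
set u := undup (sp ++ sq); have uu : uniq u by rewrite undup_uniq.
have ep : p = \sum_(a <- u) iota (cf p a) * xm a.
  by apply: cf_expand => // a /Sp Ha; rewrite mem_undup mem_cat Ha.
have eq : q = \sum_(a <- u) iota (cf q a) * xm a.
  by apply: cf_expand => // a /Sq Ha; rewrite mem_undup mem_cat Ha orbT.
have e : p + q = \sum_(a <- u) iota (cf p a + cf q a) * xm a.
  by rewrite {1}ep {1}eq -big_split; apply: eq_bigr => a _; rewrite rmorphD mulrDl.
rewrite (cf_unique uu e); case: ifP => // /negbT bu.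
have hp : cf p b = 0.
  by apply/eqP; apply: contraR bu => /Sp H; rewrite mem_undup mem_cat H.
have hq : cf q b = 0.
  by apply/eqP; apply: contraR bu => /Sq H; rewrite mem_undup mem_cat H orbT.
by rewrite hp hq addr0.
Qed.

Lemma cf0 b : cf 0 b = 0.
Proof. by apply: (addrI (cf 0 b)); rewrite -cfD !addr0. Qed.

Lemma cfN p b : cf (- p) b = - cf p b.
Proof. by apply: (addrI (cf p b)); rewrite -cfD !subrr cf0. Qed.

Lemma cf_term r a b : cf (iota r * xm a) b = if b == a then r else 0.
Proof.
have e : iota r * xm a = \sum_(a' <- [:: a]) iota r * xm a' by rewrite big_seq1.
by rewrite (cf_unique (r := fun _ => r) _ e) // mem_seq1.
Qed.

(** * Commutation rules *)

Hypothesis x_iota_comm : forall i r, x i * iota r = iota (sigma i r) * x i.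
Hypothesis x_swap : forall i j, exists c : R, [/\ c != 0, x j * x i = iota c * (x i * x j) &
  ((i < j)%N -> invertible c)].
Hypothesis sigma_bij : forall i, bijective (sigma i).

Definition edelta (i : 'I_n) : exps n := [ffun k => nat_of_bool (k == i)].

Lemma xmon_edelta i : xm (edelta i) = x i.
Proof.
rewrite /xmon (eq_bigr (fun j => if j == i then x i else 1)).
  by rewrite -big_mkcond big_pred1_eq.
by move=> j _; rewrite ffunE; case: eqP => [->|]; rewrite ?expr1 ?expr0.
Qed.

Lemma iota_mulx_inj i : injective (fun r => iota r * x i).
Proof.
move=> u v /= /(congr1 (cf^~ (edelta i))).
by rewrite -xmon_edelta !cf_term eqxx.
Qed.

Lemma sigmaD i a b : sigma i (a + b) = sigma i a + sigma i b.
Proof.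
by apply: (@iota_mulx_inj i); rewrite /= -x_iota_comm rmorphD mulrDr !x_iota_comm -mulrDl rmorphD.
Qed.

Lemma sigmaM i a b : sigma i (a * b) = sigma i a * sigma i b.
Proof.
apply: (@iota_mulx_inj i); rewrite /= -x_iota_comm rmorphM mulrA !x_iota_comm.
by rewrite -mulrA x_iota_comm mulrA rmorphM.
Qed.

Lemma sigma1 i : sigma i 1 = 1.
Proof. by apply: (@iota_mulx_inj i); rewrite /= -x_iota_comm rmorph1 mulr1 mul1r. Qed.

Lemma sigma0 i : sigma i 0 = 0.
Proof. by apply: (addrI (sigma i 0)); rewrite -sigmaD !addr0. Qed.

Lemma invertible_iter_sigma i k a : invertible a -> invertible (iter k (sigma i) a).
Proof.
elim: k => //= k IH /IH [d [h1 h2]].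
by exists (sigma i d); rewrite -!sigmaM h1 h2 sigma1.
Qed.

Lemma xpow_iota_comm i k r : x i ^+ k * iota r = iota (iter k (sigma i) r) * x i ^+ k.
Proof.
elim: k => [|k IH]; first by rewrite !expr0 mul1r mulr1.
by rewrite exprS -mulrA IH mulrA x_iota_comm -mulrA.
Qed.

Definition xmonl (l : seq 'I_n) (a : exps n) : A := \prod_(i <- l) x i ^+ a i.

Lemma xmon_enum a : xm a = xmonl (enum 'I_n) a.
Proof. by rewrite /xmon /xmonl enumT. Qed.

Lemma xmonl_iota_comm l a r :
  xmonl l a * iota r = iota (foldr (fun i acc => iter (a i) (sigma i) acc) r l) * xmonl l a.
Proof.
elim: l r => [|i l IH] r; first by rewrite /xmonl big_nil mul1r mulr1.
by rewrite /xmonl big_cons -mulrA -/(xmonl l a) IH mulrA xpow_iota_comm -mulrA.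
Qed.

Lemma xmon_iota_comm a r : xm a * iota r = iota (sigma_pow sigma a r) * xm a.
Proof. by rewrite xmon_enum xmonl_iota_comm. Qed.

Lemma sigma_pow0 a : sigma_pow sigma a 0 = 0.
Proof. by rewrite /sigma_pow; elim: (enum 'I_n) => //= i l ->; elim: (a i) => //= k ->; apply: sigma0. Qed.

Lemma sigma_pow_bij a : bijective (sigma_pow sigma a).
Proof.
rewrite /sigma_pow; elim: (enum 'I_n) => [|i l IH] /=; first by exists id.
exact: (eq_bij (bij_comp (iter_bij _ (sigma_bij i)) IH)).
Qed.

Lemma xpow_swap (i j : 'I_n) (k : nat) : (i < j)%N ->
  exists c, invertible c /\ x j ^+ k * x i = iota c * (x i * x j ^+ k).
Proof.
move=> ij; have [c0 [_ e0 /(_ ij) u0]] := x_swap i j.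
elim: k => [|k [c [uc e]]].
  by exists 1; rewrite !expr0 rmorph1 mul1r mulr1 mul1r; split=> //; apply: invertible1.
exists (sigma j c * c0); split.
  by apply: invertibleM => //; exact: (invertible_iter_sigma j 1).
rewrite exprS -mulrA e mulrA x_iota_comm -mulrA (mulrA (x j)) e0.
by rewrite rmorphM !mulrA.
Qed.

Lemma xmonl_swap (l : seq 'I_n) (e : exps n) (i : 'I_n) : all (fun j : 'I_n => i < j)%N l ->
  exists c, invertible c /\ xmonl l e * x i = iota c * (x i * xmonl l e).
Proof.
elim: l => [|j l IH] /=.
  by exists 1; rewrite /xmonl big_nil rmorph1 !mul1r mulr1; split=> //; apply: invertible1.
case/andP=> ij /IH [c [uc ec]]; have [c' [uc' ec']] := xpow_swap (e j) ij.
exists (iter (e j) (sigma j) c * c'); split.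
  by apply: invertibleM => //; apply: invertible_iter_sigma.
rewrite /xmonl big_cons -/(xmonl l e) -mulrA ec mulrA xpow_iota_comm -mulrA mulrA.
by rewrite -mulrA (mulrA (x j ^+ e j)) ec' rmorphM !mulrA.
Qed.

Lemma xmonl_mul_x l e i : sorted (fun i j : 'I_n => i < j)%N l -> i \in l ->
  exists c, invertible c /\ xmonl l e * x i = iota c * xmonl l (eadd e (edelta i)).
Proof.
elim: l => [|j l IH] //= Hs; rewrite inE; case: eqP => [-> _|ij /= il].
  have al : all (fun k : 'I_n => j < k)%N l.
    by apply: order_path_min Hs => a b c; apply: ltn_trans.
  have [c [uc ec]] := xmonl_swap e al.
  exists (iter (e j) (sigma j) c); split; first exact: invertible_iter_sigma.
  rewrite /xmonl !big_cons -!/(xmonl l _) -mulrA ec mulrA xpow_iota_comm -mulrA.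
  rewrite (mulrA (x j ^+ _)) -exprSr.
  congr (_ * (_ * _)); first by rewrite ffunE ffunE eqxx addn1.
  apply: eq_big_seq => k kl; rewrite ffunE ffunE.
  have : (j < k)%N by move/allP: al => /(_ _ kl).
  by case: eqP => [->|]; rewrite ?ltnn ?addn0.
have [c [uc ec]] := IH (path_sorted Hs) il.
exists (iter (e j) (sigma j) c); split; first exact: invertible_iter_sigma.
rewrite /xmonl !big_cons -!/(xmonl l _) -mulrA ec mulrA xpow_iota_comm -mulrA.
by rewrite ffunE ffunE; case: eqP => [ji|]; [case: ij | rewrite addn0].
Qed.

Lemma xmon_mul_x e i : exists c, invertible c /\ xm e * x i = iota c * xm (eadd e (edelta i)).
Proof.
rewrite !xmon_enum; apply: xmonl_mul_x; last by rewrite mem_enum.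
by have := iota_ltn_sorted 0 n; rewrite -val_enum_ord sorted_map.
Qed.

Lemma xmon_mul_xpow e i k : exists c, invertible c /\
  xm e * x i ^+ k = iota c * xm [ffun j => (e j + (if j == i then k else 0))%N].
Proof.
elim: k => [|k [c [uc ec]]].
  exists 1; split; first exact: invertible1.
  rewrite expr0 mulr1 rmorph1 mul1r; congr (xm _); apply/ffunP => j.
  by rewrite ffunE; case: eqP; rewrite addn0.
have [c' [uc' ec']] := xmon_mul_x [ffun j => (e j + (if j == i then k else 0))%N] i.
exists (c * c'); split; first exact: invertibleM.
rewrite exprSr mulrA ec -mulrA ec' mulrA rmorphM; congr (_ * xm _).
apply/ffunP => j; rewrite !ffunE.
by case: (j == i) => /=; [rewrite addn1 addnS | rewrite !addn0].
Qed.

Lemma xmon_mul_xmonl l a b : uniq l -> exists c, invertible c /\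
  xm a * xmonl l b = iota c * xm [ffun k => (a k + (if k \in l then b k else 0))%N].
Proof.
elim: l a => [|j l IH] a /=.
  move=> _; exists 1; split; first exact: invertible1.
  rewrite /xmonl big_nil mulr1 rmorph1 mul1r; congr (xm _); apply/ffunP => j.
  by rewrite ffunE addn0.
case/andP=> jl ul.
have [c [uc ec]] := xmon_mul_xpow a j (b j).
have [c' [uc' ec']] := IH [ffun k => (a k + (if k == j then b j else 0))%N] ul.
exists (c * c'); split; first exact: invertibleM.
rewrite /xmonl big_cons -/(xmonl l b) mulrA ec -mulrA ec' mulrA rmorphM; congr (_ * xm _).
apply/ffunP => k; rewrite !ffunE inE; case: eqP => [->|_] /=.
  by rewrite (negbTE jl) addn0.
by rewrite addn0.
Qed.

Lemma xmonM_cab a b : invertible (cab x cf a b) /\ xm a * xm b = iota (cab x cf a b) * xm (eadd a b).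
Proof.
have [c [uc ec]] := xmon_mul_xmonl a b (enum_uniq 'I_n).
have {}ec : xm a * xm b = iota c * xm (eadd a b).
  by rewrite [xm b]xmon_enum ec; congr (_ * xm _); apply/ffunP => k; rewrite !ffunE mem_enum.
by rewrite /cab ec cf_term eqxx.
Qed.

Lemma cab_invertible a b : invertible (cab x cf a b).
Proof. by case: (xmonM_cab a b). Qed.

Lemma xmonM a b : xm a * xm b = iota (cab x cf a b) * xm (eadd a b).
Proof. by case: (xmonM_cab a b). Qed.

(** * Exponents and monomial orders *)

Definition ele (a b : exps n) := [forall k, (a k <= b k)%N].

Lemma ele_refl (a : exps n) : ele a a.
Proof. by apply/forallP. Qed.

Lemma ele_trans (a b c : exps n) : ele a b -> ele b c -> ele a c.
Proof. by move=> /forallP h1 /forallP h2; apply/forallP => k; apply: leq_trans (h1 k) (h2 k). Qed.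

Lemma ele_addr (a c : exps n) : ele a (eadd a c).
Proof. by apply/forallP => k; rewrite ffunE leq_addr. Qed.

Lemma ele_addl (a c : exps n) : ele c (eadd a c).
Proof. by apply/forallP => k; rewrite ffunE leq_addl. Qed.

Lemma esub_eaddl (a c : exps n) : esub (eadd a c) a = c.
Proof. by apply/ffunP => k; rewrite !ffunE addKn. Qed.

Lemma esub_eaddr (a c : exps n) : esub (eadd a c) c = a.
Proof. by apply/ffunP => k; rewrite !ffunE addnK. Qed.

Lemma esubKC (a b : exps n) : ele a b -> eadd a (esub b a) = b.
Proof. by move/forallP => H; apply/ffunP => k; rewrite !ffunE subnKC. Qed.

Lemma esubK (a b : exps n) : ele a b -> eadd (esub b a) a = b.
Proof. by move/forallP => H; apply/ffunP => k; rewrite !ffunE subnK. Qed.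

Lemma eaddA (a b c : exps n) : eadd (eadd a b) c = eadd a (eadd b c).
Proof. by apply/ffunP => k; rewrite !ffunE addnA. Qed.

Lemma eaddI (a : exps n) : injective (eadd a).
Proof. exact: (can_inj (g := fun c => esub c a) (esub_eaddl a)). Qed.

Lemma cf_shift (r : R) (a : exps n) (p : A) (b : exps n) : cf (iota r * xm a * p) b =
  if ele a b then r * sigma_pow sigma a (cf p (esub b a)) * cab x cf a (esub b a) else 0.
Proof.
have [sp [usp Sp ep]] := cf_repr p.
pose G b' := r * sigma_pow sigma a (cf p (esub b' a)) * cab x cf a (esub b' a).
have e : iota r * xm a * p = \sum_(b' <- map (eadd a) sp) iota (G b') * xm b'.
  rewrite big_map {1}ep mulr_sumr; apply: eq_bigr => c _; rewrite /G esub_eaddl.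
  by rewrite -mulrA (mulrA (xm a)) xmon_iota_comm -!mulrA xmonM !rmorphM !mulrA.
rewrite (cf_unique _ e); last by rewrite map_inj_uniq //; apply: eaddI.
case: ifP => [bm|/negbT bm]; case: ifP => // dab.
  by move: bm dab => /mapP [c _ ->]; rewrite ele_addr.
have : esub b a \notin sp by apply: contra bm => H; rewrite -(esubKC dab) map_f.
move=> /negP H; have -> : cf p (esub b a) = 0 by apply/eqP/negPn/negP => /Sp /H.
by rewrite sigma_pow0 mulr0 mul0r.
Qed.

Lemma cfv_shift (r : R) (a : exps n) (v : 'cV[A]_m) b j : cfv cf ((iota r * xm a) *: v) (b, j) =
  if ele a b then r * sigma_pow sigma a (cfv cf v (esub b a, j)) * cab x cf a (esub b a) else 0.
Proof. by rewrite /cfv /= mxE cf_shift. Qed.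

Lemma cfv_shift_top (r : R) (a : exps n) (v : 'cV[A]_m) c j :
  cfv cf ((iota r * xm a) *: v) (eadd a c, j) =
  r * sigma_pow sigma a (cfv cf v (c, j)) * cab x cf a c.
Proof. by rewrite cfv_shift ele_addr esub_eaddl. Qed.

Lemma cfv_shift_neq0 (r : R) (a : exps n) (v : 'cV[A]_m) b j : cfv cf ((iota r * xm a) *: v) (b, j) != 0 ->
  exists2 c, b = eadd a c & cfv cf v (c, j) != 0.
Proof.
rewrite cfv_shift; case: ifP => [dab H|]; last by rewrite eqxx.
exists (esub b a); first by rewrite esubKC.
by apply: contraNneq H => ->; rewrite sigma_pow0 mulr0 mul0r.
Qed.

Lemma cfvD (f g : 'cV[A]_m) X : cfv cf (f + g) X = cfv cf f X + cfv cf g X.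
Proof. by rewrite /cfv mxE cfD. Qed.

Lemma cfvB (f g : 'cV[A]_m) X : cfv cf (f - g) X = cfv cf f X - cfv cf g X.
Proof. by rewrite cfvD /cfv mxE cfN. Qed.

Lemma cfv0 X : cfv cf (0 : 'cV[A]_m) X = 0.
Proof. by rewrite /cfv mxE cf0. Qed.

Lemma cfv_sum I (s : seq I) (P : pred I) (F : I -> 'cV[A]_m) X :
  cfv cf (\sum_(i <- s | P i) F i) X = \sum_(i <- s | P i) cfv cf (F i) X.
Proof. exact: (big_morph (cfv cf ^~ X) (fun f g => cfvD f g X) (cfv0 X)). Qed.

Hypothesis ordA_monomial : monorderA x cf ordA.
Hypothesis ordm_monomial : monorderV x cf ordA ordm.

Lemma ordm_refl : reflexive ordm.
Proof. by case: ordm_monomial => [[]]. Qed.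

Lemma ordm_anti (X Y : vmon n m) : ordm X Y -> ordm Y X -> X = Y.
Proof. by case: ordm_monomial => [[_ H _ _]] _ _ _ h1 h2; apply: H; rewrite h1 h2. Qed.

Lemma ordm_trans (X Y Z : vmon n m) : ordm X Y -> ordm Y Z -> ordm X Z.
Proof. by case: ordm_monomial => [[_ _ H _]] _ _ _ h1 h2; apply: (H Y). Qed.

Lemma lmA_xmonM (a b : exps n) : lmA cf ordA (xm a * xm b) = Some (eadd a b).
Proof.
pose P (o : option (exps n)) := match o with
  | Some c => cf (xm a * xm b) c != 0 /\ (forall d, cf (xm a * xm b) d != 0 -> ordA c d)
  | None => xm a * xm b = 0 end.
have supp d : cf (xm a * xm b) d != 0 -> d = eadd a b.
  by rewrite xmonM cf_term; case: (d =P eadd a b) => // _; rewrite eqxx.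
have hP : P (Some (eadd a b)).
  split; first by rewrite xmonM cf_term eqxx invertible_neq0 //; apply: cab_invertible.
  by move=> d /supp ->; case: ordA_monomial => [[]].
have := epsilon_spec (inhabits None) P (ex_intro _ _ hP).
rewrite /lmA -/P; case: (epsilon _ _) => [c [/supp -> _]|h] //.
by move: hP => [+ _]; rewrite h cf0 eqxx.
Qed.

Definition vshift (a : exps n) (Z : vmon n m) : vmon n m := (eadd a Z.1, Z.2).

Lemma ordm_shift (a : exps n) (Z Y : vmon n m) : ordm Z Y -> ordm (vshift a Z) (vshift a Y).
Proof.
case: Z Y => [z j] [y i] /= h; case: ordm_monomial => _ _ H _.
by have := H y z a i j h; rewrite !lmA_xmonM.
Qed.

Definition gtm (X Y : vmon n m) := ordm X Y && (Y != X).

Lemma gtm_ordm_trans (X Y Z : vmon n m) : gtm X Y -> ordm Y Z -> gtm X Z.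
Proof.
move=> /andP [h1 h2] h3; rewrite /gtm (ordm_trans h1 h3) /=.
by apply: contra h2 => /eqP e; rewrite e in h3; apply/eqP; apply: ordm_anti.
Qed.

Lemma gtm_shift (a : exps n) (Z Y : vmon n m) : gtm Z Y -> gtm (vshift a Z) (vshift a Y).
Proof.
case: Z Y => [z j] [y i] /andP [h1 h2]; rewrite /gtm (ordm_shift a h1) /=.
by apply: contra h2 => /eqP [/eaddI -> ->].
Qed.

Lemma ordm_max_seq (L : seq (vmon n m)) : L != [::] ->
  exists2 X, X \in L & forall Y, Y \in L -> ordm X Y.
Proof.
elim: L => // a L IH _; have [->|/IH [X XL HX]] := eqVneq L [::].
  by exists a; rewrite ?mem_seq1 // => Y; rewrite mem_seq1 => /eqP ->; apply: ordm_refl.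
have [[_ _ _ tot] _ _ _] := ordm_monomial; case/orP: (tot a X) => h.
  exists a; first by rewrite mem_head.
  by move=> Y; rewrite inE => /predU1P [->|/HX]; [apply: ordm_refl | apply: ordm_trans].
by exists X; [rewrite inE XL orbT | move=> Y; rewrite inE => /predU1P [->|/HX]].
Qed.

Lemma cfv_supp_finite (f : 'cV[A]_m) :
  exists L : seq (vmon n m), forall X, cfv cf f X != 0 -> X \in L.
Proof.
have [s Hs] : exists s : 'I_m -> seq (exps n), forall j a, cf (f j ord0) a != 0 -> a \in s j.
  apply: (fin_all_exists (P := fun j s => forall a, cf (f j ord0) a != 0 -> a \in s)).
  by move=> j; have [s [_ H _]] := cf_repr (f j ord0); exists s.
exists (flatten [seq [seq (a, j) | a <- s j] | j <- enum 'I_m]) => [[a j]] /= H.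
by apply/flatten_mapP; exists j; [rewrite mem_enum | apply/map_f/Hs].
Qed.

Lemma cfv_neq0_exists (f : 'cV[A]_m) : f != 0 -> exists X, cfv cf f X != 0.
Proof.
move=> fn; have [j fj] : exists j, f j ord0 != 0.
  apply/existsP; apply: contraNT fn => /existsPn fj0; apply/eqP/matrixP => j k.
  by rewrite [k]ord1 mxE; apply/eqP/negbNE.
have [s [_ _ ep]] := cf_repr (f j ord0).
have [a _ ha] : exists2 a, a \in s & cf (f j ord0) a != 0.
  apply/hasP; apply: contraNT fj => /hasPn h; rewrite ep big1_seq // => a /andP [_ /h].
  by rewrite negbK => /eqP ->; rewrite rmorph0 mul0r.
by exists (a, j).
Qed.

Lemma lmv_spec (f : 'cV[A]_m) : f != 0 -> exists X,
  [/\ lmv cf ordm f = Some X, cfv cf f X != 0 & forall Y, cfv cf f Y != 0 -> ordm X Y].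
Proof.
move=> fn; have [L HL] := cfv_supp_finite f; have [X0 HX0] := cfv_neq0_exists fn.
have ne : [seq Y <- L | cfv cf f Y != 0] != [::].
  by apply/eqP => H; have := mem_filter (fun Y => cfv cf f Y != 0) X0 L; rewrite H HX0 HL.
have [X] := ordm_max_seq ne.
rewrite mem_filter => /andP [Xn _] HX.
pose P (o : option (vmon n m)) := match o with
  | None => f = 0
  | Some X => cfv cf f X != 0 /\ (forall Y, cfv cf f Y != 0 -> ordm X Y) end.
have hP : P (Some X) by split=> // Y hY; apply: HX; rewrite mem_filter hY HL.
have := epsilon_spec (inhabits None) P (ex_intro _ _ hP).
by rewrite /lmv -/P; case: (epsilon _ _) => [X' []|/eqP]; [exists X' | rewrite (negbTE fn)].
Qed.

Lemma lmv0 : lmv cf ordm (0 : 'cV[A]_m) = None.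
Proof.
pose P (o : option (vmon n m)) := match o with
  | None => (0 : 'cV[A]_m) = 0
  | Some X => cfv cf 0 X != 0 /\ (forall Y, cfv cf 0 Y != 0 -> ordm X Y) end.
have := epsilon_spec (inhabits None) P (ex_intro _ None (erefl _)).
by rewrite /lmv -/P; case: (epsilon _ _) => // X [+ _]; rewrite cfv0 eqxx.
Qed.

Lemma lmv_some (f : 'cV[A]_m) X : lmv cf ordm f = Some X ->
  [/\ f != 0, lcv cf ordm f = cfv cf f X, cfv cf f X != 0 &
      forall Y, cfv cf f Y != 0 -> ordm X Y].
Proof.
have [->|fn] := eqVneq f 0; first by rewrite lmv0.
have [X' [h1 h2 h3]] := lmv_spec fn; rewrite h1 => -[<-].
by rewrite /lcv h1.
Qed.

(* Induction on the degree and, within a degree, on the number of smaller monomials: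
   exponents of degree at most [d] form a finite type. *)
Lemma gtm_ind (P : vmon n m -> Prop) :
  (forall X, (forall Y, gtm X Y -> P Y) -> P X) -> forall X, P X.
Proof.
move=> IHP X; suff H d : forall Z, edeg Z.1 = d -> P Z by apply: H.
elim/ltn_ind: d {X} => d IHd.
pose emb (Z : {ffun 'I_n -> 'I_d.+1} * 'I_m) : vmon n m := ([ffun k => val (Z.1 k)], Z.2).
suff H k : forall Z, edeg Z.1 = d -> #|[pred W | gtm Z (emb W)]| = k -> P Z.
  by move=> Z hZ; apply: H hZ erefl.
elim/ltn_ind: k => k IHk X hd hk; apply: IHP => Y gtXY; have /andP [hXY hYX] := gtXY.
have hYd : (edeg Y.1 <= d)%N.
  rewrite leqNgt -hd; apply: contra hYX => hlt; apply/eqP/ordm_anti => //.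
  by case: ordm_monomial => _ _ _; apply.
case: (ltnP (edeg Y.1) d) => [hlt|hge]; first exact: IHd hlt Y erefl.
have eYd : edeg Y.1 = d by apply/eqP; rewrite eqn_leq hYd hge.
apply: (IHk _ _ Y eYd erefl); rewrite -hk; apply: proper_card; apply/properP; split.
  by apply/subsetP => W; rewrite !inE => /andP [hYW _]; apply: gtm_ordm_trans gtXY hYW.
have [pY epY] : exists pY, emb pY = Y.
  exists ([ffun l => inord (Y.1 l)], Y.2); case: Y {gtXY hXY hYX hYd hge} eYd => [y j] /= eYd.
  rewrite /emb /=; congr (_, _); apply/ffunP => l; rewrite !ffunE inordK // ltnS -eYd.
  by rewrite /edeg (bigD1 l) //= leq_addr.
by exists pY; rewrite !inE epY ?gtXY // /gtm eqxx andbF.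
Qed.

(** * Standard representations *)

(* [(r, a, g)] stands for the summand [r x^a g]. *)
Definition term := (R * exps n * 'cV[A]_m)%type.

Definition term_val (t : term) : 'cV[A]_m := (iota t.1.1 * xm t.1.2) *: t.2.

Definition term_lm (t : term) : option (vmon n m) := omap (vshift t.1.2) (lmv cf ordm t.2).

Definition lm_in (D : vmon n m -> Prop) (t : term) := exists2 Z, term_lm t = Some Z & D Z.

Definition rep_terms (G : seq 'cV[A]_m) (D : vmon n m -> Prop) (ts : seq term) :=
  forall t, t \in ts -> t.2 \in G /\ lm_in D t.

Definition representable (G : seq 'cV[A]_m) (D : vmon n m -> Prop) (v : 'cV[A]_m) :=
  exists2 ts, rep_terms G D ts & v = \sum_(t <- ts) term_val t.

Lemma term_lm_some t Z : term_lm t = Some Z ->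
  exists2 Z0, lmv cf ordm t.2 = Some Z0 & Z = vshift t.1.2 Z0.
Proof. by rewrite /term_lm; case: (lmv _ _ _) => //= Z0 [<-]; exists Z0. Qed.

Lemma term_val_bound t Z : term_lm t = Some Z ->
  forall Y, cfv cf (term_val t) Y != 0 -> ordm Z Y.
Proof.
case/term_lm_some=> Z0 /lmv_some [_ _ _ Z0max] -> [b j] /cfv_shift_neq0 [c -> /Z0max].
exact: ordm_shift.
Qed.

Lemma cfv_term_lm t Z0 : lmv cf ordm t.2 = Some Z0 ->
  cfv cf (term_val t) (vshift t.1.2 Z0) =
  t.1.1 * sigma_pow sigma t.1.2 (lcv cf ordm t.2) * cab x cf t.1.2 Z0.1.
Proof. by case: Z0 => z j /lmv_some [_ -> _ _]; rewrite cfv_shift_top. Qed.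

Lemma cfv_term_below X t : lm_in (gtm X) t -> cfv cf (term_val t) X = 0.
Proof.
case=> Z tZ gtXZ; apply/eqP; apply: contraT => /(term_val_bound tZ) hZX.
by case/andP: (gtm_ordm_trans gtXZ hZX); rewrite eqxx.
Qed.

Lemma cfv_rep_bound G X ts Y : rep_terms G (ordm X) ts ->
  cfv cf (\sum_(t <- ts) term_val t) Y != 0 -> ordm X Y.
Proof.
rewrite cfv_sum => hts /sumr_neq0_witness [t /hts [_ [Z tZ hXZ]] /(term_val_bound tZ)].
exact: ordm_trans.
Qed.

Lemma rep_terms_sub G D D' ts : (forall Y, D Y -> D' Y) -> rep_terms G D ts -> rep_terms G D' ts.
Proof. by move=> DD' hts t /hts [tG [Z tZ /DD' hZ]]; split=> //; exists Z. Qed.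

Lemma rep_terms_cat G D ts ts' :
  rep_terms G D ts -> rep_terms G D ts' -> rep_terms G D (ts ++ ts').
Proof. by move=> h h' t; rewrite mem_cat => /orP [/h|/h']. Qed.

Lemma representable0 G D : representable G D 0.
Proof. by exists [::]; rewrite ?big_nil. Qed.

Lemma representableD G D u v :
  representable G D u -> representable G D v -> representable G D (u + v).
Proof.
move=> [t1 h1 ->] [t2 h2 ->]; exists (t1 ++ t2); first exact: rep_terms_cat.
by rewrite big_cat.
Qed.

Lemma representable_sum G D (I : Type) (r : seq I) (P : pred I) (F : I -> 'cV[A]_m) :
  (forall i, P i -> representable G D (F i)) -> representable G D (\sum_(i <- r | P i) F i).
Proof. by move=> h; apply: big_ind => //; [apply: representable0 | apply: representableD]. Qed.

Lemma representable_iotaZ G D c v :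
  representable G D v -> representable G D (iota c *: v).
Proof.
move=> [ts hts ->]; exists [seq (c * t.1.1, t.1.2, t.2) | t <- ts].
  by move=> _ /mapP [t /hts [tG [Z tZ hZ]] ->]; split=> //; exists Z.
by rewrite big_map scaler_sumr; apply: eq_bigr => t _; rewrite /term_val scalerA rmorphM mulrA.
Qed.

Lemma representable_xmonZ G Z d v :
  representable G (gtm Z) v -> representable G (gtm (vshift d Z)) (xm d *: v).
Proof.
move=> [ts hts ->].
exists [seq (sigma_pow sigma d t.1.1 * cab x cf d t.1.2, eadd d t.1.2, t.2) | t <- ts].
  move=> _ /mapP [t /hts [tG [Y tY hZY]] ->]; split=> //; exists (vshift d Y).
    by move: tY; rewrite /term_lm /=; case: (lmv _ _ _) => //= Y0 [<-]; rewrite /vshift eaddA.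
  exact: gtm_shift.
rewrite big_map scaler_sumr; apply: eq_bigr => t _; rewrite /term_val scalerA /=.
by rewrite mulrA xmon_iota_comm -mulrA xmonM rmorphM mulrA.
Qed.

Lemma spanned_representable G v : all (fun g => g != 0) G -> spanned G v ->
  representable G (fun _ => True) v.
Proof.
move=> G0 [a [_ ->]]; apply: representable_sum => k _.
have gG : G`_k \in G by apply: mem_nth.
have [Z [hZ _ _]] := lmv_spec (allP G0 _ gG).
have [s [_ _ ea]] := cf_repr a`_k.
exists [seq (cf a`_k b, b, G`_k) | b <- s].
  by move=> _ /mapP [b _ ->]; split=> //; rewrite /lm_in /term_lm hZ; exists (vshift b Z).
by rewrite big_map {1}ea scaler_suml.
Qed.

Lemma rep_terms_max G D ts : rep_terms G D ts -> ts != [::] ->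
  exists2 X, D X & rep_terms G (ordm X) ts.
Proof.
move=> hts; case: ts hts => // t0 ts hts _.
have [Z0 tZ0 _] := (hts t0 (mem_head _ _)).2.
have [X /[!mem_pmap] /mapP [t tts tX] Xmax] : exists2 X, X \in pmap term_lm (t0 :: ts) &
    forall Y, Y \in pmap term_lm (t0 :: ts) -> ordm X Y.
  by apply: ordm_max_seq; rewrite /= tZ0.
exists X; first by have [_ [Z tZ hZ]] := hts t tts; move: tX; rewrite tZ => -[->].
move=> t' t'ts; have [t'G [Z t'Z _]] := hts t' t'ts; split=> //; exists Z => //.
by apply: Xmax; rewrite mem_pmap -t'Z map_f.
Qed.

(** * Reduction *)

Lemma red1_terms G f h X : all (fun g => g != 0) G ->
  red1 iota x sigma cf ordm G f h -> lmv cf ordm f = Some X ->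
  exists ts, [/\ rep_terms G (eq X) ts, h = f - \sum_(t <- ts) term_val t & cfv cf h X = 0].
Proof.
move=> G0 [[f0 _]|[_ [L /= [HL HD Hl Hh]]]] hX; first by move: hX; rewrite f0 lmv0.
case: X hX => xi i hX; rewrite hX /= in Hh.
have info p : p \in L -> exists beta, [/\ p.1 \in G, lmv cf ordm p.1 = Some (beta, i) & ele beta xi].
  move=> pL; have pG : p.1 \in G := allP HL _ pL.
  have [[beta j] [hb _ _]] := lmv_spec (allP G0 _ pG).
  by move: (allP HD _ pL); rewrite hb hX /= => /andP [/eqP -> hd]; exists beta.
exists [seq (p.2, esub xi (expo (lmv cf ordm p.1)), p.1) | p <- L]; split.
- move=> _ /mapP [p pL ->]; have [beta [pG hb hd]] := info p pL; split=> //.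
  by exists (xi, i) => //; rewrite /term_lm /= hb /vshift /= esubK.
- by rewrite Hh big_map.
have [_ lcf _ _] := lmv_some hX.
rewrite Hh cfvB cfv_sum -lcf Hl hX /=; apply/eqP; rewrite subr_eq0; apply/eqP.
apply: eq_big_seq => p pL; have [beta [pG hb hd]] := info p pL; have [_ lcp _ _] := lmv_some hb.
by rewrite hb /= -[X in cfv _ _ (X, i)](esubK hd) cfv_shift_top -lcp.
Qed.

Lemma red1_supp_below G f h X : all (fun g => g != 0) G ->
  red1 iota x sigma cf ordm G f h -> lmv cf ordm f = Some X ->
  forall Y, cfv cf h Y != 0 -> gtm X Y.
Proof.
move=> G0 hr hX; have [ts [hts eh hX0]] := red1_terms G0 hr hX.
move=> Y hY; apply/andP; split; last by apply: contraNneq hY => ->; rewrite hX0.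
move: hY; rewrite eh cfvB; have [fY|fY] := eqVneq (cfv cf f Y) 0; last first.
  by move=> _; have [_ _ _] := lmv_some hX; apply.
rewrite fY sub0r oppr_eq0; apply: cfv_rep_bound.
by apply: rep_terms_sub hts => _ <-; apply: ordm_refl.
Qed.

Lemma red1_representable G (D : vmon n m -> Prop) f g : all (fun g => g != 0) G ->
  (forall Y Y', D Y -> ordm Y Y' -> D Y') ->
  red1 iota x sigma cf ordm G f g -> (forall Y, cfv cf f Y != 0 -> D Y) ->
  (forall Y, cfv cf g Y != 0 -> D Y) /\ exists2 ts, rep_terms G D ts & f = g + \sum_(t <- ts) term_val t.
Proof.
move=> G0 hD hr hf; have [f0|fn] := eqVneq f 0.
  have g0 : g = 0 by case: hr => [[]|[]] //; rewrite f0 eqxx.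
  by split=> [Y|]; [rewrite g0 cfv0 eqxx | exists [::]; rewrite // f0 g0 big_nil addr0].
have [X [hX hXn _]] := lmv_spec fn; have [ts [hts eg _]] := red1_terms G0 hr hX.
split=> [Y /(red1_supp_below G0 hr hX) /andP [hXY _]|]; first exact: hD (hf _ hXn) hXY.
by exists ts; [apply: rep_terms_sub hts => _ <-; apply: hf | rewrite eg subrK].
Qed.

Lemma red_plus_representable G (D : vmon n m -> Prop) f : all (fun g => g != 0) G ->
  (forall Y Y', D Y -> ordm Y Y' -> D Y') ->
  red_plus iota x sigma cf ordm G f 0 -> (forall Y, cfv cf f Y != 0 -> D Y) ->
  representable G D f.
Proof.
move=> G0 hD; have H f' h : red_plus iota x sigma cf ordm G f' h -> h = 0 ->
    (forall Y, cfv cf f' Y != 0 -> D Y) -> representable G D f'.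
  elim=> [{}f' g hr|{}f' g g' hr _ IH] h0 hf.
    have [_ [ts hts ->]] := red1_representable G0 hD hr hf.
    by exists ts; rewrite // h0 add0r.
  have [hg [ts hts ->]] := red1_representable G0 hD hr hf.
  by apply: representableD (IH h0 hg) _; exists ts.
by move=> r; apply: H r erefl.
Qed.

Lemma groebner_red_plus M G f : is_submodule M -> is_groebner iota x sigma cf ordm M G ->
  M f -> red_plus iota x sigma cf ordm G f 0.
Proof.
move=> [M0 MD MZ] [_ G0 GM Gred] Mf.
have [->|fn] := eqVneq f 0; first by apply: rp_one; left.
have [X [hX _ _]] := lmv_spec fn.
elim/gtm_ind: X f Mf fn hX => X IH f Mf fn hX.
have [_ [h hr]] := Gred f Mf fn.
have [ts [hts eh _]] := red1_terms G0 hr hX.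
have Mh : M h.
  rewrite eh -scaleN1r; apply: (MD) => //; apply: (MZ); rewrite big_seq.
  by apply: big_ind => // t /hts [tG _]; apply/MZ/GM.
have [h0|hn] := eqVneq h 0; first by apply: rp_one; rewrite -h0.
have [Y [hY hYn _]] := lmv_spec hn.
exact: rp_step hr (IH Y (red1_supp_below G0 hr hX hYn) h Mh hn hY).
Qed.

Lemma rep_terms_strict G X ts : rep_terms G (ordm X) ts ->
  rep_terms G (gtm X) [seq t <- ts | term_lm t != Some X].
Proof.
move=> hts t; rewrite mem_filter => /andP [tX /hts [tG [Z tZ hXZ]]]; split=> //.
by exists Z; rewrite // /gtm hXZ; apply: contraNneq tX => <-; rewrite tZ.
Qed.

Lemma cfv_rep_strict G X ts : rep_terms G (gtm X) ts ->
  cfv cf (\sum_(t <- ts) term_val t) X = 0.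
Proof. by move=> hts; rewrite cfv_sum big_seq big1 // => t /hts [_ /cfv_term_below]. Qed.

(** * Syzygies *)

Lemma XF_foldl (i : 'I_m) (xi : exps n) (F : seq 'cV[A]_m) (z : exps n) :
  (forall g, g \in F -> exists beta, lmv cf ordm g = Some (beta, i) /\ ele beta xi) -> ele z xi ->
  exists z', [/\ foldl (fun acc h => mlcm acc (lmv cf ordm h)) (Some (z, i)) F = Some (z', i),
     ele z z', ele z' xi & forall g beta, g \in F -> lmv cf ordm g = Some (beta, i) -> ele beta z'].
Proof.
elim: F z => [|g F IH] z hF hz /=; first by exists z; split=> //; apply: ele_refl.
have [beta [hb hbx]] := hF g (mem_head _ _); rewrite hb /= eqxx.
set z1 := [ffun k => maxn (z k) (beta k)].
have hz1 : ele z1 xi.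
  by apply/forallP => k; rewrite ffunE geq_max (forallP hz k) (forallP hbx k).
have [z' [e1 e2 e3 e4]] := IH z1 (fun g' hg' => hF g' (mem_behead (s := g :: F) hg')) hz1.
have hzz : ele z z1 by apply/forallP => k; rewrite ffunE leq_maxl.
have hbz : ele beta z1 by apply/forallP => k; rewrite ffunE leq_maxr.
exists z'; split => //; first exact: ele_trans hzz e2.
move=> g' beta' /predU1P [->|hg'] hb'; last exact: e4 hg' hb'.
by move: hb'; rewrite hb => -[<-]; apply: ele_trans hbz e2.
Qed.

Lemma XF_spec (F : seq 'cV[A]_m) (i : 'I_m) (xi : exps n) : F != [::] ->
  (forall g, g \in F -> exists beta, lmv cf ordm g = Some (beta, i) /\ ele beta xi) ->
  exists zeta, [/\ XF cf ordm F = Some (zeta, i), ele zeta xi &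
     forall g beta, g \in F -> lmv cf ordm g = Some (beta, i) -> ele beta zeta].
Proof.
case: F => // g F _ hF; have [beta [hb hbx]] := hF g (mem_head _ _).
have [z' [e1 e2 e3 e4]] := XF_foldl (fun g' hg' => hF g' (mem_behead (s := g :: F) hg')) hbx.
exists z'; split => //; first by rewrite /XF hb.
move=> g' beta' /predU1P [->|hg'] hb'; last exact: e4 hg' hb'.
by move: hb'; rewrite hb => -[<-].
Qed.

Lemma size_syz_weights F : size (syz_weights x sigma cf ordm F) = size F.
Proof. exact: size_map. Qed.

Lemma syz_sum_map (F : seq 'cV[A]_m) (r : 'cV[A]_m -> R) :
  syz_sum iota x cf ordm F (map r F) =
  \sum_(g <- F) (iota (r g) * xm (gam cf ordm F g)) *: g.
Proof.
rewrite /syz_sum [RHS](big_nth 0) big_mkord; apply: eq_bigr => k _.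
by rewrite (nth_map 0).
Qed.

Lemma syz_sum_comb (F : seq 'cV[A]_m) (b : seq R) (Bs : seq (seq R)) (c : seq R) :
  (forall k, (k < size F)%N -> b`_k = \sum_(j < size Bs) c`_j * (nth [::] Bs j)`_k) ->
  syz_sum iota x cf ordm F b =
  \sum_(j < size Bs) iota c`_j *: syz_sum iota x cf ordm F (nth [::] Bs j).
Proof.
move=> hb; rewrite /syz_sum.
under [RHS]eq_bigr do rewrite scaler_sumr.
rewrite exchange_big /=; apply: eq_bigr => k _.
under eq_bigr do rewrite scalerA mulrA -rmorphM.
by rewrite -scaler_suml -mulr_suml -rmorph_sum hb.
Qed.

Section Syzygies.
Variables (F : seq 'cV[A]_m) (zeta : exps n) (i : 'I_m).
Hypothesis XF_F : XF cf ordm F = Some (zeta, i).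
Hypothesis lm_F : forall g, g \in F ->
  exists beta, lmv cf ordm g = Some (beta, i) /\ ele beta zeta.

Lemma cfv_syz_sum b :
  (forall Y, cfv cf (syz_sum iota x cf ordm F b) Y != 0 -> ordm (zeta, i) Y) /\
  cfv cf (syz_sum iota x cf ordm F b) (zeta, i) =
    \sum_(k < size F) b`_k * (syz_weights x sigma cf ordm F)`_k.
Proof.
have key (k : 'I_(size F)) : exists beta, [/\ lmv cf ordm F`_k = Some (beta, i),
    ele beta zeta & gam cf ordm F F`_k = esub zeta beta].
  have [beta [hb hd]] := lm_F (mem_nth 0 (ltn_ord k)).
  by exists beta; split=> //; rewrite /gam XF_F hb.
split.
  move=> Y; rewrite /syz_sum cfv_sum => /sumr_neq0_witness [k _].
  have [beta [hb hd ->]] := key k; have [_ _ _ bmax] := lmv_some hb.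
  case: Y => y j /cfv_shift_neq0 [c -> /bmax] /(ordm_shift (esub zeta beta)).
  by rewrite /vshift /= esubK.
rewrite /syz_sum cfv_sum; apply: eq_bigr => k _; have [beta [hb hd hg]] := key k.
have [_ lcb _ _] := lmv_some hb.
rewrite hg -[X in cfv _ _ (X, i)](esubK hd) cfv_shift_top.
by rewrite /syz_weights (nth_map 0) // hg hb /= lcb mulrA.
Qed.

Lemma syzygy_representable G (B : seq (seq R)) b : all (fun g => g != 0) G ->
  generates_syz B (syz_weights x sigma cf ordm F) ->
  (forall b', b' \in B -> red_plus iota x sigma cf ordm G (syz_sum iota x cf ordm F b') 0) ->
  is_syz (syz_weights x sigma cf ordm F) b ->
  representable G (gtm (zeta, i)) (syz_sum iota x cf ordm F b).
Proof.
move=> G0 [Bsyz Bgen] Bred /Bgen [c [_ hc]].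
rewrite (@syz_sum_comb _ _ B c); last by move=> k; rewrite -size_syz_weights; apply: hc.
apply: representable_sum => j _; apply: representable_iotaZ.
have bjB : nth [::] B j \in B := mem_nth [::] (ltn_ord j).
apply: red_plus_representable G0 _ (Bred _ bjB) _; first exact: gtm_ordm_trans.
have [bound top] := cfv_syz_sum (nth [::] B j).
move=> Y hY; rewrite /gtm bound //=; apply: contraNneq hY => ->.
by rewrite top -size_syz_weights; case: (Bsyz _ bjB) => _ ->.
Qed.

End Syzygies.

Lemma eadd_esub_esub (xi zeta beta : exps n) : ele beta zeta -> ele zeta xi ->
  eadd (esub xi zeta) (esub zeta beta) = esub xi beta.
Proof.
move=> /forallP hb /forallP hz; apply/ffunP => k; rewrite !ffunE.
by rewrite addnBA // subnK.
Qed.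

Lemma cfv_xmonZ_eq0 d (v : 'cV[A]_m) Z :
  cfv cf (xm d *: v) (vshift d Z) = 0 -> cfv cf v Z = 0.
Proof.
case: Z => z j; rewrite -(mul1r (xm d)) -(rmorph1 iota) cfv_shift_top mul1r => h.
have [e [he _]] := cab_invertible d z.
apply: (bij_inj (sigma_pow_bij d)); rewrite sigma_pow0.
by rewrite -[LHS]mulr1 -he mulrA h mul0r.
Qed.

(* [sigma^d] is bijective and [c_{d,gamma}] invertible, so every coefficient can be pulled
   back through the shift by [x^d]. *)
Lemma top_terms_shift F ts xi zeta i : uniq F ->
  XF cf ordm F = Some (zeta, i) -> ele zeta xi ->
  (forall g, g \in F -> exists beta, lmv cf ordm g = Some (beta, i) /\ ele beta zeta) ->
  (forall t, t \in ts -> t.2 \in F /\ term_lm t = Some (xi, i)) ->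
  exists2 b, size b = size F &
    \sum_(t <- ts) term_val t = xm (esub xi zeta) *: syz_sum iota x cf ordm F b.
Proof.
move=> uF hXF hzx lmF hts; set d := esub xi zeta.
have [sinv _ sinvK] := sigma_pow_bij d.
pose cu g := cab x cf d (gam cf ordm F g).
pose cinv g := epsilon (inhabits 0) (fun e => e * cu g = 1).
have cinvK g : cinv g * cu g = 1.
  have [e [_ he]] := cab_invertible d (gam cf ordm F g).
  exact: (epsilon_spec (inhabits 0) (fun e => e * cu g = 1) (ex_intro _ e he)).
pose rho g := \sum_(t <- ts | t.2 == g) t.1.1.
exists (map (fun g => sinv (rho g * cinv g)) F); first by rewrite size_map.
rewrite syz_sum_map scaler_sumr (big_partition_key (F := F) (key := fun t : term => t.2)) //; last first.
  by move=> t /hts [].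
apply: eq_big_seq => g gF; have [beta [hb hbz]] := lmF g gF.
have -> : xm d *: ((iota (sinv (rho g * cinv g)) * xm (gam cf ordm F g)) *: g) =
    (iota (rho g) * xm (esub xi beta)) *: g.
  rewrite scalerA mulrA xmon_iota_comm sinvK -mulrA xmonM mulrA -(rmorphM iota) -mulrA cinvK mulr1.
  by rewrite /gam hXF hb /= eadd_esub_esub.
rewrite rmorph_sum mulr_suml scaler_suml big_seq_cond [RHS]big_seq_cond.
apply: eq_bigr => t /andP [tts /eqP tg].
have [_ /term_lm_some [Z0 hZ0 eX]] := hts t tts.
move: hZ0 eX; rewrite tg hb => -[<-] [exi].
by rewrite /term_val tg exi esub_eaddr.
Qed.

Section Buchberger.
Variables (G : seq 'cV[A]_m) (B : seq 'cV[A]_m -> seq (seq R)).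
Hypothesis G_neq0 : all (fun g => g != 0) G.
Hypothesis G_uniq : uniq G.
Hypothesis B_gen : forall F, F != [::] -> subseq F G -> XF cf ordm F != None ->
  generates_syz (B F) (syz_weights x sigma cf ordm F).
Hypothesis B_red : forall F, F != [::] -> subseq F G -> XF cf ordm F != None ->
  forall b, b \in B F -> red_plus iota x sigma cf ordm G (syz_sum iota x cf ordm F b) 0.

Lemma top_terms_representable ts X :
  (forall t, t \in ts -> t.2 \in G /\ term_lm t = Some X) ->
  cfv cf (\sum_(t <- ts) term_val t) X = 0 ->
  representable G (gtm X) (\sum_(t <- ts) term_val t).
Proof.
case: X => xi i hts topX.
pose F := [seq g <- G | mdiv (lmv cf ordm g) (Some (xi, i))].
have tsF t : t \in ts -> t.2 \in F /\ term_lm t = Some (xi, i).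
  move=> /hts [tG tX]; split=> //; have [[beta j] hb [exi ij]] := term_lm_some tX.
  by rewrite mem_filter tG hb /= ij eqxx exi andbT; apply: ele_addl.
have [F0|Fn] := eqVneq F [::].
  suff -> : \sum_(t <- ts) term_val t = 0 by apply: representable0.
  by rewrite big_seq big1 // => t /tsF []; rewrite F0.
have lmF g : g \in F -> exists beta, lmv cf ordm g = Some (beta, i) /\ ele beta xi.
  rewrite mem_filter => /andP [hm /(allP G_neq0)/lmv_spec [[beta j] [hb _ _]]].
  by move: hm; rewrite hb /= => /andP [/eqP -> hd]; exists beta.
have [zeta [hXF hzx hbz]] := XF_spec Fn lmF.
have lmFz g : g \in F -> exists beta, lmv cf ordm g = Some (beta, i) /\ ele beta zeta.
  by move=> gF; have [beta [hb _]] := lmF g gF; exists beta; split=> //; apply: hbz hb.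
have [b sizeb eT] := top_terms_shift (filter_uniq _ G_uniq) hXF hzx lmFz tsF.
rewrite eT in topX *.
have eX : vshift (esub xi zeta) (zeta, i) = (xi, i) by rewrite /vshift /= esubK.
suff rep : representable G (gtm (zeta, i)) (syz_sum iota x cf ordm F b).
  by move: (representable_xmonZ (esub xi zeta) rep); rewrite eX.
have FG : subseq F G := filter_subseq _ _.
have XFn : XF cf ordm F != None by rewrite hXF.
apply: (syzygy_representable hXF lmFz G_neq0 (B_gen Fn FG XFn) (B_red Fn FG XFn)).
split; first by rewrite size_syz_weights.
rewrite size_syz_weights; have [_ <-] := cfv_syz_sum hXF lmFz b.
by apply: (@cfv_xmonZ_eq0 (esub xi zeta)); rewrite eX.
Qed.

Lemma lower_height ts X : rep_terms G (ordm X) ts ->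
  cfv cf (\sum_(t <- ts) term_val t) X = 0 ->
  representable G (gtm X) (\sum_(t <- ts) term_val t).
Proof.
move=> hts fX; set top := [seq t <- ts | term_lm t == Some X].
have esplit : \sum_(t <- ts) term_val t =
    \sum_(t <- top) term_val t + \sum_(t <- [seq t <- ts | term_lm t != Some X]) term_val t.
  by rewrite !big_filter [LHS](bigID (fun t : term => term_lm t == Some X)).
rewrite esplit in fX *; apply: representableD.
  2: by exists [seq t <- ts | term_lm t != Some X]; first exact: rep_terms_strict.
apply: top_terms_representable.
  by move=> t; rewrite mem_filter => /andP [/eqP tX /hts [tG _]].
by move: fX; rewrite cfvD (cfv_rep_strict (rep_terms_strict hts)) addr0.
Qed.

Lemma representation_at_lm f Xf X ts : lmv cf ordm f = Some Xf ->
  rep_terms G (ordm X) ts -> f = \sum_(t <- ts) term_val t ->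
  exists2 ts', rep_terms G (ordm Xf) ts' & f = \sum_(t <- ts') term_val t.
Proof.
move=> hXf; elim/gtm_ind: X ts => X IH ts hts ef.
have [fn _ _ Xfmax] := lmv_some hXf.
have [hXfX|hXfX] := boolP (ordm Xf X).
  by exists ts => //; apply: rep_terms_sub hts => Z; apply: ordm_trans.
have fX : cfv cf (\sum_(t <- ts) term_val t) X = 0.
  by rewrite -ef; apply/eqP; apply: contraNT hXfX => /Xfmax.
have [ts2 hts2 e2] := lower_height hts fX.
have ts2n : ts2 != [::] by apply: contraNneq fn => ts20; rewrite ef e2 ts20 big_nil.
have [X' gtXX' hts2'] := rep_terms_max hts2 ts2n.
by apply: (IH _ gtXX' _ hts2'); rewrite ef.
Qed.

End Buchberger.

Lemma reducible_of_rep G f Xf ts : lmv cf ordm f = Some Xf ->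
  rep_terms G (ordm Xf) ts -> f = \sum_(t <- ts) term_val t ->
  reducible iota x sigma cf ordm G f.
Proof.
case: Xf => xi i hXf hts ef; have [fn lcf _ _] := lmv_some hXf.
set top := [seq t <- ts | term_lm t == Some (xi, i)].
have topP t : t \in top ->
    exists2 beta, lmv cf ordm t.2 = Some (beta, i) & t.2 \in G /\ eadd t.1.2 beta = xi.
  rewrite mem_filter => /andP [/eqP tX /hts [tG _]].
  by have [[beta j] hb [exi ij]] := term_lm_some tX; exists beta; rewrite ?ij.
pose L := [seq (t.2, t.1.1) | t <- top].
split=> //; exists (f - \sum_(p <- L) (iota p.2 * xm (esub xi (expo (lmv cf ordm p.1)))) *: p.1).
right; split=> //; exists L; rewrite /= hXf /=; split=> //.
- by apply/allP => _ /mapP [t /topP [beta _ []] tG _ ->].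
- apply/allP => _ /mapP [t /topP [beta hb [_ exi]] ->] /=.
  by rewrite hb /= eqxx -exi; apply: ele_addl.
rewrite lcf ef cfv_sum (bigID (fun t => term_lm t == Some (xi, i))) /=.
have -> : \sum_(t <- ts | term_lm t != Some (xi, i)) cfv cf (term_val t) (xi, i) = 0.
  by rewrite -cfv_sum -big_filter (cfv_rep_strict (rep_terms_strict hts)).
rewrite addr0 -big_filter big_map; apply: eq_big_seq => t /topP [beta hb [_ exi]] /=.
have := cfv_term_lm hb; rewrite /vshift /= exi => ->.
by rewrite hb /= -exi esub_eaddr.
Qed.

Lemma spanned_mem (G : seq 'cV[A]_m) g : g \in G -> spanned G g.
Proof.
move=> gG; exists (mkseq (fun j => (j == index g G)%:R) (size G)); rewrite size_mkseq.
split=> //; have gi : (index g G < size G)%N by rewrite index_mem.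
rewrite (bigD1 (Ordinal gi)) //= nth_mkseq // eqxx scale1r nth_index // big1 ?addr0 //.
move=> j; rewrite -val_eqE /= nth_mkseq // => /negbTE ->.
by rewrite scale0r.
Qed.

Lemma submodule_syz_sum M F b : is_submodule M -> (forall g, g \in F -> M g) ->
  M (syz_sum iota x cf ordm F b).
Proof.
move=> [M0 MD MZ] MF; apply: big_ind => // k _.
by apply/MZ/MF; apply: mem_nth.
Qed.

Lemma groebner_iff_syzygy_sums_reduce M G B :
  is_submodule M -> (exists v, M v /\ v != 0) ->
  uniq G -> all (fun g => g != 0) G -> (forall v, M v <-> spanned G v) ->
  (forall F, F != [::] -> subseq F G -> XF cf ordm F != None ->
     generates_syz (B F) (syz_weights x sigma cf ordm F)) ->
  is_groebner iota x sigma cf ordm M G <->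
  (forall F, F != [::] -> subseq F G -> XF cf ordm F != None ->
     forall b, b \in B F -> red_plus iota x sigma cf ordm G (syz_sum iota x cf ordm F b) 0).
Proof.
move=> HM [v [Mv v0]] uG G0 MG Bgen; split.
  move=> gb F _ FG _ b _; apply: (groebner_red_plus HM gb).
  by case: gb => _ _ GM _; apply: submodule_syz_sum => // g /(mem_subseq FG) /GM.
move=> Bred; split=> //.
- by apply: contraNneq v0 => G_nil; have [a [_ ->]] := (MG v).1 Mv; rewrite G_nil big_ord0.
- by move=> g /spanned_mem /MG.
move=> f Mf f0; have [ts hts ef] := spanned_representable G0 ((MG f).1 Mf).
have [Xf [hXf _ _]] := lmv_spec f0.
have tsn : ts != [::] by apply: contraNneq f0 => ts_nil; rewrite ef ts_nil big_nil.
have [X _ htsX] := rep_terms_max hts tsn.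
have [ts' hts' ef'] := representation_at_lm G0 uG Bgen Bred hXf htsX ef.
exact: reducible_of_rep hXf hts' ef'.
Qed.

End PBW.

Theorem theorem30 (R A : nzRingType) (n m : nat) (iota : {rmorphism R -> A})
  (x : 'I_n -> A) (sigma : 'I_n -> R -> R) (cf : A -> exps n -> R)
  (ordA : rel (exps n)) (ordm : rel (exps n * 'I_m))
  (B : seq 'cV[A]_m -> seq (seq R)) (M : 'cV[A]_m -> Prop) (G : seq 'cV[A]_m) :
  left_noetherian R ->
  injective iota ->
  (forall i, ~ exists r, x i = iota r) ->
  mon_lin_indep iota x ->
  coord_repr iota x cf ->
  (forall i r, x i * iota r = iota (sigma i r) * x i) ->
  (forall i j, exists c : R, [/\ c != 0, x j * x i = iota c * (x i * x j) &
      ((i < j)%N -> exists d, c * d = 1 /\ d * c = 1)]) ->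
  (forall i, bijective (sigma i)) ->
  monorderA x cf ordA ->
  monorderV x cf ordA ordm ->
  is_submodule M -> (exists v, M v /\ v != 0) ->
  uniq G -> all (fun g => g != 0) G -> (forall v, M v <-> spanned G v) ->
  (forall F, F != [::] -> subseq F G -> XF cf ordm F != None ->
     generates_syz (B F) (syz_weights x sigma cf ordm F)) ->
  is_groebner iota x sigma cf ordm M G <->
  (forall F, F != [::] -> subseq F G -> XF cf ordm F != None ->
     forall b, b \in B F -> red_plus iota x sigma cf ordm G (syz_sum iota x cf ordm F b) 0).
Proof.
(* Noetherianity of [R] only ensures that the sets [B F] exist, and these are given. *)
move=> _ _ _ free repr comm swap bij oA oM.
exact: (groebner_iff_syzygy_sums_reduce free repr comm swap bij oA oM).
Qed.
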